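(* Let $(T,s)$ be a parking function on a rooted tree $T$ with vertex set $[n]$, and let $e=(u,v)$ be an edge of $T$ (oriented $u\to v$, towards the root). Then $e$ is used by $s$ if and only if $|T_u|<|\{i: s_i\in T_u\}|$. Furthermore, the set of edges used by $s$ is invariant under permutations of the entries of $s$.
   Context: $T$ is a rooted tree on vertex set $[n]$ with edges oriented towards the root; an edge $u\to v$ is written $(u,v)$. For $s\in[n]^n$, drivers $1,\dots,n$ arrive in order; driver $i$ parks at $s_i$ if unoccupied, otherwise follows the directed path towards the root and parks at the first unoccupied vertex, leaving if none exists. $(T,s)$ is a parking function if all drivers park. $T_u$ denotes the set of vertices $w$ having a directed path from $w$ to $u$ (including $u$). An edge $e$ is used by $s$ if some driver, after failing to park at her preferred vertex, crosses $e$ during her search for an unoccupied vertex. *)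

From mathcomp Require Import all_boot all_fingroup.
Set Implicit Arguments. Unset Strict Implicit. Unset Printing Implicit Defensive.

(* A rooted tree on vertex set [n] (encoded as 'I_n) with edges oriented
   towards the root r is given by its parent map par : every non-root
   vertex u has the unique out-edge (u, par u); the root is a fixed point
   and every vertex reaches the root by iterating par. *)
Definition is_rooted_tree n (par : 'I_n -> 'I_n) (r : 'I_n) : Prop :=
  par r = r /\ forall v : 'I_n, exists k, iter k par v = r.

Definition is_edge n (par : 'I_n -> 'I_n) (r u v : 'I_n) : bool :=
  (u != r) && (par u == v).

(* The directed path from p towards the root (n vertices long, which
   covers the whole path to r; after reaching r it stays at r). *)
Definition path_to_root n (par : 'I_n -> 'I_n) (p : 'I_n) : seq 'I_n :=
  traject par p n.

Definition subtree n (par : 'I_n -> 'I_n) (u : 'I_n) : {set 'I_n} :=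
  [set w | u \in path_to_root par w].

(* State of the parking process: (all drivers so far parked?,
   occupied vertices, edges crossed so far). *)
Definition pstate n := (bool * {set 'I_n} * {set 'I_n * 'I_n})%type.

(* She walks along the path
   from p towards the root and parks at the first unoccupied vertex; she
   crosses every edge (u, par u) with u strictly before her spot (if no
   unoccupied vertex exists she crosses all edges to the root and leaves). *)
Definition park_step n (par : 'I_n -> 'I_n) (r : 'I_n)
    (st : pstate n) (p : 'I_n) : pstate n :=
  let: (ok, occ, used) := st in
  let pth := path_to_root par p in
  let k := find (fun v => v \notin occ) pth in
  let crossed := [set (u, par u) | u in [seq u <- take k pth | u != r]] in
  if k < n then (ok, nth p pth k |: occ, used :|: crossed)
  else (false, occ, used :|: crossed).

(* Run drivers 1..n (encoded 0..n-1) in order with preferences s. *)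
Definition run_parking n (par : 'I_n -> 'I_n) (r : 'I_n) (s : 'I_n -> 'I_n)
    : pstate n :=
  foldl (park_step par r) (true, set0, set0) [seq s i | i <- enum 'I_n].

Definition parking_function n (par : 'I_n -> 'I_n) (r : 'I_n)
    (s : 'I_n -> 'I_n) : Prop :=
  (run_parking par r s).1.1 = true.

Definition used_edges n (par : 'I_n -> 'I_n) (r : 'I_n) (s : 'I_n -> 'I_n)
    : {set 'I_n * 'I_n} :=
  (run_parking par r s).2.

From mathcomp Require Import all_boot all_fingroup.
From mathcomp Require Import zify.
Set Implicit Arguments. Unset Strict Implicit. Unset Printing Implicit Defensive.

(* For a set A of vertices closed under descendants, each driver adds at most
   one occupied vertex to A, and only if she prefers a vertex of A.  For
   A = T_u the same bound holds for the number of occupied vertices of T_u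
   plus one if (u, par u) is used: a driver crossing (u, par u) starts in T_u
   and, the tree being acyclic, parks outside it.  Conversely, while (u, par u) is unused, every driver
   preferring T_u parks in T_u.  As a parking function fills all vertices,
   (u, par u) is used iff more than |T_u| drivers prefer T_u.  This count is
   symmetric in the drivers, and so is being a parking function: s parks
   everybody iff every descendant-closed A is preferred by at least |A|
   drivers, since otherwise the descendants of the vertices left free get all
   the drivers preferring them but stay partly empty. *)

Section Potential.

Variables (S A : Type) (step : S -> A -> S) (f : S -> nat) (w : A -> nat).

Lemma foldl_potential_le :
    (forall st a, f (step st a) <= f st + w a) ->
  forall L st, f (foldl step st L) <= f st + sumn (map w L).
Proof.
move=> f_step; elim=> [|a L IHL] st /=; first by rewrite addn0.
by rewrite addnA (leq_trans (IHL _)) // leq_add2r.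
Qed.

Variable P : S -> Prop.
Hypothesis P_step : forall st a, P (step st a) -> P st.

Lemma foldl_P L st : P (foldl step st L) -> P st.
Proof. by elim: L st => //= a L IHL st /IHL /P_step. Qed.

Lemma foldl_potential_ge :
    (forall st a, P (step st a) -> f st + w a <= f (step st a)) ->
  forall L st, P (foldl step st L) -> f st + sumn (map w L) <= f (foldl step st L).
Proof.
move=> f_step; elim=> [|a L IHL] st /= PL; first by rewrite addn0.
by rewrite addnA (leq_trans _ (IHL _ PL)) // leq_add2r; apply: f_step; apply: foldl_P PL.
Qed.

End Potential.

Lemma cardIU1 (T : finType) (x : T) (B A : {set T}) :
  #|(x |: B) :&: A| = #|B :&: A| + ((x \in A) && (x \notin B)).
Proof.
rewrite setIUl; case: (boolP (x \in A)) => xA /=.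
  have -> : [set x] :&: A = [set x] by apply/setIidPl; rewrite sub1set.
  by rewrite cardsU1 inE xA andbT addnC.
have -> : [set x] :&: A = set0.
  by apply/setP => y; rewrite !inE; case: eqP => // ->; rewrite (negbTE xA).
by rewrite set0U addn0.
Qed.

Section Paths.

Variables (n : nat) (par : 'I_n -> 'I_n).

Lemma iter_mem_path_to_root p j : iter j par p \in path_to_root par p.
Proof.
have : fconnect par p (iter j par p) by apply: fconnect_iter.
rewrite fconnect_orbit /fingraph.orbit => orb_j.
have le_order : fingraph.order par p <= n by rewrite -{2}(card_ord n) max_card.
have -> : path_to_root par p = traject par p (fingraph.order par p + (n - fingraph.order par p)).
  by rewrite subnKC.
by rewrite trajectD mem_cat orb_j.
Qed.

Lemma path_to_rootP p x :
  reflect (exists j, x = iter j par p) (x \in path_to_root par p).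
Proof.
apply: (iffP idP) => [/trajectP [j _ ->]|[j ->]]; first by exists j.
exact: iter_mem_path_to_root.
Qed.

Lemma path_to_root_trans p x y :
  x \in path_to_root par p -> y \in path_to_root par x -> y \in path_to_root par p.
Proof.
by move=> /path_to_rootP [i ->] /path_to_rootP [j ->]; rewrite -iterD iter_mem_path_to_root.
Qed.

Definition descendant_closed (A : {set 'I_n}) :=
  forall x y, x \in A -> x \in path_to_root par y -> y \in A.

Lemma subtree_closed u : descendant_closed (subtree par u).
Proof. by move=> x y; rewrite !inE => ux xy; apply: path_to_root_trans xy ux. Qed.

Definition descendants (B : {set 'I_n}) :=
  [set x | has (mem B) (path_to_root par x)].

Lemma descendants_closed (B : {set 'I_n}) : descendant_closed (descendants B).
Proof.
move=> x y; rewrite !inE => /hasP [z zx zB] xy.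
by apply/hasP; exists z => //; apply: path_to_root_trans xy zx.
Qed.

Lemma index_path_to_root_lt p x :
  x \in path_to_root par p -> index x (path_to_root par p) < n.
Proof. by rewrite -index_mem /path_to_root size_traject. Qed.

Lemma iter_index_path_to_root p x :
  x \in path_to_root par p -> iter (index x (path_to_root par p)) par p = x.
Proof.
move=> xp; have := nth_index p xp.
by rewrite /path_to_root nth_traject // index_path_to_root_lt.
Qed.

End Paths.

Section ParkStep.

Variables (n : nat) (par : 'I_n -> 'I_n) (r : 'I_n).

(* [park_index occ p = n] when the whole path from [p] is occupied. *)
Definition park_index (occ : {set 'I_n}) p :=
  find (fun v => v \notin occ) (path_to_root par p).

Definition park_spot occ p := iter (park_index occ p) par p.

Definition crossed_edges occ p : {set 'I_n * 'I_n} :=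
  [set (u, par u) | u in [seq u <- take (park_index occ p) (path_to_root par p) | u != r]].

Lemma park_stepE ok occ used p :
  park_step par r (ok, occ, used) p =
  if park_index occ p < n then (ok, park_spot occ p |: occ, used :|: crossed_edges occ p)
  else (false, occ, used :|: crossed_edges occ p).
Proof. by rewrite /park_step; case: ifP => // lt_k; rewrite /path_to_root nth_traject. Qed.

Lemma park_spot_fresh occ p : park_index occ p < n -> park_spot occ p \notin occ.
Proof.
move=> lt_k; have : has (fun v => v \notin occ) (path_to_root par p).
  by rewrite has_find /path_to_root size_traject.
by move=> /(nth_find p); rewrite /path_to_root nth_traject.
Qed.

Lemma mem_crossed_edges occ p a b :
  ((a, b) \in crossed_edges occ p) =
  [&& a \in take (park_index occ p) (path_to_root par p), a != r & b == par a].
Proof.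
apply/imsetP/and3P => [[x] | [a_take a_r /eqP ->]]; last first.
  by exists a; rewrite // mem_filter a_r.
by rewrite mem_filter => /andP [x_r x_take] [-> ->].
Qed.

Lemma crossed_edgesE occ p u : u \in path_to_root par p ->
  ((u, par u) \in crossed_edges occ p) =
  (u != r) && (index u (path_to_root par p) < park_index occ p).
Proof. by move=> up; rewrite mem_crossed_edges in_take // eqxx andbT andbC. Qed.

Lemma parks_within occ p z : z \in path_to_root par p ->
  park_index occ p <= index z (path_to_root par p) ->
  park_index occ p < n /\ z \in path_to_root par (park_spot occ p).
Proof.
move=> zp le_k; split; first exact: leq_ltn_trans le_k (index_path_to_root_lt zp).
by rewrite -(iter_index_path_to_root zp) -(subnK le_k) iterD iter_mem_path_to_root.
Qed.

Lemma park_index_le_free (occ : {set 'I_n}) p z : z \notin occ ->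
  park_index occ p <= index z (path_to_root par p).
Proof. by move=> z_free; apply: sub_find => v /eqP ->. Qed.

Lemma park_step_ok (st : pstate n) (p : 'I_n) : (park_step par r st p).1.1 -> st.1.1.
Proof. by case: st => [[ok occ] used]; rewrite park_stepE; case: ifP. Qed.

Lemma park_step_occ_sub (st : pstate n) (p : 'I_n) :
  st.1.2 \subset (park_step par r st p).1.2.
Proof.
by case: st => [[ok occ] used]; rewrite park_stepE; case: ifP => _ //=; apply: subsetUr.
Qed.

Lemma park_step_used (st : pstate n) (p : 'I_n) :
  (park_step par r st p).2 = st.2 :|: crossed_edges st.1.2 p.
Proof. by case: st => [[ok occ] used]; rewrite park_stepE; case: ifP. Qed.

Lemma park_step_used_edges (st : pstate n) (p : 'I_n) :
  st.2 \subset [set e | is_edge par r e.1 e.2] ->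
  (park_step par r st p).2 \subset [set e | is_edge par r e.1 e.2].
Proof.
rewrite park_step_used subUset => -> /=.
apply/subsetP => -[a b]; rewrite mem_crossed_edges inE => /and3P [_ a_r /eqP ->].
by rewrite /is_edge a_r /=.
Qed.

Lemma card_park_step_le (st : pstate n) (p : 'I_n) :
  #|(park_step par r st p).1.2| + ~~ (park_step par r st p).1.1 <=
  #|st.1.2| + ~~ st.1.1 + 1.
Proof.
case: st => [[ok occ] used]; rewrite park_stepE /=; case: ifP => lt_k /=.
  by rewrite cardsU1 park_spot_fresh //; case: ok => /=; lia.
by case: ok => /=; lia.
Qed.

Lemma card_park_step_ge (st : pstate n) (p : 'I_n) :
  (park_step par r st p).1.1 -> #|st.1.2| + 1 <= #|(park_step par r st p).1.2|.
Proof.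
case: st => [[ok occ] used]; rewrite park_stepE /=; case: ifP => //= lt_k _.
by rewrite cardsU1 park_spot_fresh // addnC.
Qed.

Lemma card_park_stepI_le (st : pstate n) (p : 'I_n) (A : {set 'I_n}) :
  descendant_closed par A ->
  #|(park_step par r st p).1.2 :&: A| <= #|st.1.2 :&: A| + (p \in A).
Proof.
case: st => [[ok occ] used] A_closed; rewrite park_stepE /=.
case: ifP => _ /=; last exact: leq_addr.
rewrite cardIU1 leq_add2l; case spotA: (park_spot occ p \in A) => //=.
by rewrite (A_closed _ _ spotA (iter_mem_path_to_root _ _ _)) leq_b1.
Qed.

Lemma card_park_stepI_ge (st : pstate n) (p : 'I_n) (A : {set 'I_n}) :
  (p \in A -> park_index st.1.2 p < n /\ park_spot st.1.2 p \in A) ->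
  #|st.1.2 :&: A| + (p \in A) <= #|(park_step par r st p).1.2 :&: A|.
Proof.
move=> inA; case: (boolP (p \in A)) => [/inA [lt_k spotA]|_].
  case: st inA lt_k spotA => [[ok occ] used] _ lt_k spotA.
  by rewrite park_stepE lt_k /= cardIU1 spotA park_spot_fresh.
by rewrite addn0 subset_leq_card // setSI // park_step_occ_sub.
Qed.

Lemma card_park_step_subtree_ge (st : pstate n) (p u : 'I_n) :
  u != r -> (u, par u) \notin (park_step par r st p).2 ->
  #|st.1.2 :&: subtree par u| + (p \in subtree par u) <=
  #|(park_step par r st p).1.2 :&: subtree par u|.
Proof.
move=> u_r; rewrite park_step_used in_setU negb_or => /andP [_ not_crossed].
apply: card_park_stepI_ge; rewrite inE => up.
move: not_crossed; rewrite crossed_edgesE // u_r -leqNgt => le_k.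
by have [lt_k u_spot] := parks_within up le_k; rewrite inE.
Qed.

End ParkStep.

Section TreeStep.

Variables (n : nat) (par : 'I_n -> 'I_n) (r : 'I_n).
Hypothesis tree : is_rooted_tree par r.

Lemma notin_path_to_root_iter u m :
  u != r -> 0 < m -> u \notin path_to_root par (iter m par u).
Proof.
have [par_r reach_r] := tree; move=> u_r m_gt0; apply/path_to_rootP => -[j].
rewrite -iterD; set q := j + m => periodic.
have iter_r k : iter k par r = r by elim: k => //= k ->.
have iter_period t : iter (t * q) par u = u.
  by elim: t => //= t IHt; rewrite mulSn iterD IHt -periodic.
have [K reachK] := reach_r u.
have le_K : K <= K * q by rewrite leq_pmulr // addn_gt0 m_gt0 orbT.
move: u_r; rewrite -(iter_period K) -(subnK le_K) iterD reachK iter_r.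
by rewrite eqxx.
Qed.

Lemma park_spot_notin_subtree occ p u :
  u != r -> u \in path_to_root par p ->
  index u (path_to_root par p) < park_index par occ p ->
  park_spot par occ p \notin subtree par u.
Proof.
move=> u_r up lt_idx; rewrite inE /park_spot -(subnK (ltnW lt_idx)) iterD.
by rewrite iter_index_path_to_root // notin_path_to_root_iter // subn_gt0.
Qed.

Lemma card_park_step_subtree_le (st : pstate n) (p u : 'I_n) : u != r ->
  #|(park_step par r st p).1.2 :&: subtree par u| +
    ((u, par u) \in (park_step par r st p).2) <=
  #|st.1.2 :&: subtree par u| + ((u, par u) \in st.2) + (p \in subtree par u).
Proof.
move=> u_r; rewrite park_step_used in_setU.
have le_occ := card_park_stepI_le r st p (@subtree_closed n par u).
case: (boolP ((u, par u) \in crossed_edges par r st.1.2 p)) => [|_]; last first.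
  by rewrite orbF addnAC leq_add2r.
rewrite mem_crossed_edges => /and3P [u_take _ _].
have up : u \in path_to_root par p := mem_take u_take.
have pu : p \in subtree par u by rewrite inE.
have same_occ :
    #|(park_step par r st p).1.2 :&: subtree par u| = #|st.1.2 :&: subtree par u|.
  case: st {le_occ} u_take => [[ok occ] used] u_take.
  rewrite park_stepE; case: ifP => //= _.
  by rewrite cardIU1 (negbTE (park_spot_notin_subtree _ _ _)) ?addn0 // -in_take.
by rewrite orbT same_occ pu; lia.
Qed.

End TreeStep.

Section Run.

Variables (n : nat) (par : 'I_n -> 'I_n) (r : 'I_n) (s : 'I_n -> 'I_n).

Local Notation drivers := [seq s i | i <- enum 'I_n].
Local Notation final_occ := (run_parking par r s).1.2.

Lemma sumn_drivers_mem (A : {set 'I_n}) :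
  sumn [seq (x \in A) : nat | x <- drivers] = #|[set i | s i \in A]|.
Proof.
rewrite sumn_count count_map enumT cardE /enum_mem size_filter.
by apply: eq_count => i; rewrite !inE.
Qed.

Lemma sumn_drivers_1 : sumn [seq 1 | _ <- drivers] = n.
Proof. by rewrite (sumn_count predT) count_predT size_map size_enum_ord. Qed.

Lemma run_parking_full : parking_function par r s -> final_occ = setT.
Proof.
move=> pf; have := foldl_potential_ge (step := park_step par r)
  (P := fun st : pstate n => st.1.1) (f := fun st => #|st.1.2|) (w := fun _ => 1)
  (@park_step_ok n par r) (@card_park_step_ge n par r) pf.
rewrite cards0 sumn_drivers_1 => le_n.
by apply/eqP; rewrite eqEcard subsetT cardsT card_ord.
Qed.

Lemma card_run_parking_lt :
  ~ parking_function par r s -> #|final_occ| < n.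
Proof.
move=> /negP not_pf.
have := foldl_potential_le (step := park_step par r)
  (f := fun st => #|st.1.2| + ~~ st.1.1) (w := fun _ => 1)
  (@card_park_step_le n par r) drivers (true, set0, set0).
by rewrite cards0 sumn_drivers_1 -/(run_parking par r s) not_pf addn1.
Qed.

Lemma used_edges_sub : used_edges par r s \subset [set e | is_edge par r e.1 e.2].
Proof.
have : ((true, set0, set0) : pstate n).2 \subset [set e | is_edge par r e.1 e.2].
  exact: sub0set.
rewrite /used_edges /run_parking; elim: drivers (true, set0, set0) => //= p L IHL st.
by move=> /(park_step_used_edges p) /IHL.
Qed.

Lemma card_drivers_le_free_descendants :
  #|[set i | s i \in descendants par (~: final_occ)]| <=
  #|final_occ :&: descendants par (~: final_occ)|.
Proof.
set D := descendants par _.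
have P_step st p : (park_step par r st p).1.2 \subset final_occ -> st.1.2 \subset final_occ.
  exact/subset_trans/park_step_occ_sub.
have parks_in_D st p : (park_step par r st p).1.2 \subset final_occ ->
    #|st.1.2 :&: D| + (p \in D) <= #|(park_step par r st p).1.2 :&: D|.
  move=> /P_step occ_sub; apply: card_park_stepI_ge; rewrite inE => /hasP [z zp].
  rewrite !inE => z_free.
  have le_k := park_index_le_free par p (contra (subsetP occ_sub z) z_free).
  have [lt_k z_spot] := parks_within zp le_k.
  by split=> //; apply/hasP; exists z; rewrite ?inE.
have := foldl_potential_ge (step := park_step par r)
  (P := fun st => st.1.2 \subset final_occ) (f := fun st => #|st.1.2 :&: D|)
  (w := fun x => x \in D) P_step parks_in_D (subxx final_occ).
by rewrite set0I cards0 sumn_drivers_mem.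
Qed.

Lemma not_parking_function_deficit : ~ parking_function par r s ->
  exists2 D, descendant_closed par D & #|[set i | s i \in D]| < #|D|.
Proof.
move=> /card_run_parking_lt lt_occ; exists (descendants par (~: final_occ)).
  exact: descendants_closed.
apply: (leq_ltn_trans card_drivers_le_free_descendants); apply: proper_card.
have /subsetPn [z0 _ z0_free] : ~~ ([set: 'I_n] \subset final_occ).
  by apply: contraTN lt_occ => /subset_leq_card; rewrite cardsT card_ord leqNgt.
apply/properP; split; first exact: subsetIr.
exists z0; last by rewrite inE (negbTE z0_free).
by rewrite inE; apply/hasP; exists z0; rewrite ?inE // (iter_mem_path_to_root par z0 0).
Qed.

Lemma card_closed_le_drivers (A : {set 'I_n}) :
  parking_function par r s -> descendant_closed par A ->
  #|A| <= #|[set i | s i \in A]|.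
Proof.
move=> pf A_closed.
have := foldl_potential_le (step := park_step par r)
  (f := fun st => #|st.1.2 :&: A|) (w := fun x => x \in A)
  (fun st p => card_park_stepI_le r st p A_closed) drivers (true, set0, set0).
rewrite -/(run_parking par r s) sumn_drivers_mem (run_parking_full pf).
by rewrite setTI set0I cards0.
Qed.

Lemma parking_functionP : parking_function par r s <->
  forall A, descendant_closed par A -> #|A| <= #|[set i | s i \in A]|.
Proof.
split=> [pf A|le_drivers]; first exact: card_closed_le_drivers.
apply/negPn/negP => /negP not_pf.
have [D /le_drivers le_D] := not_parking_function_deficit not_pf.
by rewrite ltnNge le_D.
Qed.

Hypotheses (tree : is_rooted_tree par r) (pf : parking_function par r s).

Lemma card_subtree_lt_of_used u : u != r ->
  (u, par u) \in used_edges par r s ->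
  #|subtree par u| < #|[set i | s i \in subtree par u]|.
Proof.
move=> u_r used_u.
have := foldl_potential_le (step := park_step par r)
  (f := fun st => #|st.1.2 :&: subtree par u| + ((u, par u) \in st.2))
  (w := fun x => x \in subtree par u)
  (fun st p => card_park_step_subtree_le tree st p u_r) drivers (true, set0, set0).
rewrite -/(run_parking par r s) sumn_drivers_mem (run_parking_full pf) setTI.
by rewrite [_ \in _]used_u set0I cards0 in_set0 addn1.
Qed.

Lemma used_of_card_subtree_lt u : u != r ->
  #|subtree par u| < #|[set i | s i \in subtree par u]| ->
  (u, par u) \in used_edges par r s.
Proof.
move=> u_r; apply: contraLR; rewrite -leqNgt => not_used.
have P_step st p : (u, par u) \notin (park_step par r st p).2 -> (u, par u) \notin st.2.
  by rewrite park_step_used in_setU negb_or => /andP [].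
have := foldl_potential_ge (step := park_step par r)
  (P := fun st : pstate n => (u, par u) \notin st.2)
  (f := fun st => #|st.1.2 :&: subtree par u|) (w := fun x => x \in subtree par u) P_step
  (fun st p => card_park_step_subtree_ge u_r)
  not_used.
rewrite -/(run_parking par r s) sumn_drivers_mem (run_parking_full pf) setTI.
by rewrite set0I cards0.
Qed.

Lemma used_edgesE : used_edges par r s =
  [set e | is_edge par r e.1 e.2 &&
           (#|subtree par e.1| < #|[set i | s i \in subtree par e.1]|)].
Proof.
apply/setP => -[a b]; rewrite inE /=.
apply/idP/andP => [used_ab | [/andP [a_r /eqP <-]]]; last exact: used_of_card_subtree_lt.
have := subsetP used_edges_sub _ used_ab; rewrite inE /= => edge_ab.
split=> //; case/andP: edge_ab used_ab => a_r /eqP <-.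
exact: card_subtree_lt_of_used.
Qed.

End Run.

Lemma card_preim_perm n (s : 'I_n -> 'I_n) (sigma : 'S_n) (A : {set 'I_n}) :
  #|[set i | s (sigma i) \in A]| = #|[set i | s i \in A]|.
Proof.
rewrite -[RHS](card_preimset _ (@perm_inj _ sigma)).
by apply: eq_card => i; rewrite !inE.
Qed.

Lemma parking_function_perm n (par : 'I_n -> 'I_n) r s (sigma : 'S_n) :
  parking_function par r s -> parking_function par r (fun i => s (sigma i)).
Proof.
move=> /parking_functionP le_drivers; apply/parking_functionP => A /le_drivers.
by rewrite card_preim_perm.
Qed.

Theorem proposition2p4 (n : nat) (par : 'I_n -> 'I_n) (r : 'I_n)
    (s : 'I_n -> 'I_n) :
  is_rooted_tree par r -> parking_function par r s ->
  (forall u v : 'I_n, is_edge par r u v ->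
     ((u, v) \in used_edges par r s <->
      #|subtree par u| < #|[set i : 'I_n | s i \in subtree par u]|)) /\
  (forall sigma : 'S_n,
     used_edges par r (fun i => s (sigma i)) = used_edges par r s).
Proof.
move=> tree pf; split=> [u v uv | sigma].
  by rewrite used_edgesE // inE uv.
have pf_sigma := parking_function_perm sigma pf.
by rewrite !used_edgesE //; apply/setP => e; rewrite !inE card_preim_perm.
Qed.
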